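(* Let $v\geq 8$, let $C_v$ be the configuration on $\mathbb{Z}_v$ with blocks $\{m,m+1,m+3\}$, $m\in\mathbb{Z}_v$, and let $S$ be a blocking set of $C_v$, with associated circular binary word $\mathbf{b}(S)=b_0\cdots b_{v-1}$ ($b_i=1$ iff $i\in S$). Then either (a) $\mathbf{b}(S)$ alternates $0101\cdots$ or $1010\cdots$ (which is possible only if $v$ is even), or (b) $\mathbf{b}(S)$ consists of runs of 0s and runs of 1s each of length 2 or 3.
   Context: A blocking set is a subset $Q$ of the points such that every block contains at least one point of $Q$ and at least one point not in $Q$. A circular binary word of length $n$ is a sequence $b_0,\dots,b_{n-1}\in\{0,1\}$ with indices taken modulo $n$. A run of length $k$ is a maximal sequence of $k$ cyclically consecutive equal digits (bounded on both sides by the other digit). *)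

From mathcomp Require Import all_boot.
Set Implicit Arguments. Unset Strict Implicit. Unset Printing Implicit Defensive.

Definition block (v : nat) (m : 'I_v) : {set 'I_v} :=
  [set x : 'I_v | [|| val x == m %% v, val x == (m + 1) %% v
                    | val x == (m + 3) %% v]].

Definition blocking_set (v : nat) (Q : {set 'I_v}) : Prop :=
  forall m : 'I_v, (block m :&: Q != set0) /\ (block m :\: Q != set0).

Definition word (v : nat) (S : {set 'I_v}) (i : nat) : bool :=
  [exists x in S, val x == i %% v].

Definition is_run (v : nat) (b : nat -> bool) (i k : nat) : Prop :=
  0 < k /\ b (i + v - 1) != b i /\
  (forall j, j < k -> b (i + j) = b i) /\ b (i + k) != b i.

Definition alternating (v : nat) (b : nat -> bool) : Prop :=
  forall i, i < v -> b (i + 1) != b i.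

(* (b): the word consists of runs (it is not constant), each of length 2 or 3. *)
Definition runs_2_or_3 (v : nat) (b : nat -> bool) : Prop :=
  (exists i, i < v /\ b (i + 1) != b i) /\
  (forall i k, i < v -> is_run v b i k -> k = 2 \/ k = 3).

From mathcomp Require Import all_boot.
From mathcomp Require Import zify.

(* Write b for the circular word of S, viewed as a v-periodic
   boolean sequence on nat.  The blocking condition on the block
   {n, n+1, n+3} says exactly that b_n = b_(n+1) = b_(n+3) never holds.
   This single local constraint does all the work:
   - a "zigzag" b_j <> b_(j+1) <> b_(j+2) propagates backwards: if it holds
     at j+1 it holds at j.  Hence one run of length 1 (an isolated digit)
     spreads, by periodicity, to the whole word, which then alternates;
   - otherwise no run has length 1, and no run has length >= 4, since four
     equal consecutive digits b_i = ... = b_(i+3) violate the constraint;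
     the word is also not constant for the same reason. *)

Definition no_monochromatic_block (b : nat -> bool) : Prop :=
  forall n, ~ (b n = b (n + 1) /\ b (n + 1) = b (n + 3)).

Definition zigzag (b : nat -> bool) (j : nat) : Prop :=
  b j != b (j + 1) /\ b (j + 1) != b (j + 2).

Section ConstrainedWords.

Variables (v : nat) (b : nat -> bool).
Hypothesis b_constrained : no_monochromatic_block b.

(* A zigzag at j+1 forces a zigzag at j: if b_j = b_(j+1), the two changes
   after j+1 would give b_(j+3) = b_(j+1), a monochromatic block at j. *)
Lemma zigzag_pred j : zigzag b (j + 1) -> zigzag b j.
Proof.
rewrite /zigzag -!addnA /= => -[ch1 ch2]; split=> //.
apply/negP=> /eqP same; apply: (b_constrained j); split=> //.
by move: same ch1 ch2; case: (b j); case: (b (j + 1)); case: (b (j + 2));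
  case: (b (j + 3)).
Qed.

Lemma zigzag_down j t : zigzag b (j + t) -> zigzag b j.
Proof.
elim: t j => [|t IH] j; first by rewrite addn0.
by move=> zz; apply: IH; apply: zigzag_pred; rewrite -addnA addn1.
Qed.

Lemma isolated_digit_alternating i :
  (forall n, b (n + v) = b n) -> 0 < v ->
  b (i + v - 1) != b i -> b (i + 1) != b i -> alternating v b.
Proof.
move=> b_periodic v_gt0 change_before change_after k k_lt_v.
have zz_top : zigzag b (i + v - 1).
  rewrite /zigzag (_ : i + v - 1 + 2 = i + 1 + v); last by lia.
  by rewrite (_ : i + v - 1 + 1 = i + v) ?b_periodic 1?eq_sym //; lia.
have := @zigzag_down k (i + v - 1 - k).
by rewrite subnKC; [move=> /(_ zz_top) [+ _]; rewrite eq_sym | lia].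
Qed.

Lemma not_constant : 3 <= v -> exists i, i < v /\ b (i + 1) != b i.
Proof.
move=> v_ge3; have := b_constrained 0.
have [e01 | ne01] := eqVneq (b 0) (b 1); last by exists 0; split; [lia | rewrite eq_sym].
have [e12 | ne12] := eqVneq (b 1) (b 2); last by exists 1; split; [lia | rewrite eq_sym].
move=> no_block; exists 2; split; first by lia.
apply/negP=> /eqP e23; change (b 3 = b 2) in e23.
by apply: no_block; rewrite !add0n e01 e12 e23.
Qed.

(* Four equal consecutive digits are forbidden, so runs are shorter. *)
Lemma run_length_lt4 i k : is_run v b i k -> k < 4.
Proof.
move=> [_ [_ [run_const _]]]; rewrite ltnNge; apply/negP=> k_ge4.
by apply: (b_constrained i); rewrite !run_const //; lia.
Qed.

Lemma no_isolated_runs_2_or_3 :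
  3 <= v ->
  (forall i, i < v -> b (i + v - 1) != b i -> b (i + 1) = b i) ->
  runs_2_or_3 v b.
Proof.
move=> v_ge3 no_isolated; split; first exact: not_constant.
move=> i k i_lt_v run; have k_lt4 := run_length_lt4 i k run.
case: run => [k_gt0 [change_before [_ change_after]]].
have k_ne1 : k != 1.
  by apply/eqP=> k1; move: change_after; rewrite k1 no_isolated ?eqxx.
lia.
Qed.

Lemma constrained_word_dichotomy :
  (forall n, b (n + v) = b n) -> 3 <= v ->
  alternating v b \/ runs_2_or_3 v b.
Proof.
move=> b_periodic v_ge3.
have [/existsP [i /andP [before after]] | /existsPn no_isolated] :=
  boolP [exists i : 'I_v, (b (i + v - 1) != b i) && (b (i + 1) != b i)].
  by left; apply: (isolated_digit_alternating i b_periodic _ before after); lia.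
right; apply: no_isolated_runs_2_or_3 => // i i_lt_v before.
by move: (no_isolated (Ordinal i_lt_v)); rewrite /= before negbK => /eqP.
Qed.

End ConstrainedWords.

Lemma wordE (v : nat) (S : {set 'I_v}) (x : 'I_v) (n : nat) :
  val x = n %% v -> word S n = (x \in S).
Proof.
move=> x_n; apply/existsP/idP => [[y /andP [yS /eqP y_n]] | xS].
  by have -> : x = y by apply: val_inj; rewrite x_n y_n.
by exists x; rewrite xS x_n eqxx.
Qed.

Lemma word_periodic (v : nat) (S : {set 'I_v}) (n : nat) :
  word S (n + v) = word S n.
Proof. by rewrite /word modnDr. Qed.

Lemma blocking_word_constrained (v : nat) (S : {set 'I_v}) :
  0 < v -> blocking_set S -> no_monochromatic_block (word S).
Proof.
move=> v_gt0 blocking n [e01 e13].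
pose m := Ordinal (ltn_pmod n v_gt0).
have block_const x : x \in block m -> (x \in S) = word S n.
  rewrite inE /= => /or3P [] /eqP x_m.
  - by rewrite (@wordE v S x n) // -modn_mod -x_m.
  - by rewrite e01 (@wordE v S x (n + 1)) // -modnDml -x_m.
  - by rewrite e01 e13 (@wordE v S x (n + 3)) // -modnDml -x_m.
have [meets avoids] := blocking m.
case/set0Pn: meets => x; rewrite inE => /andP [xm xS].
case/set0Pn: avoids => y; rewrite inE => /andP [yS ym].
by move: xS yS; rewrite (block_const x xm) (block_const y ym) => ->.
Qed.

Theorem mainTheorem5 (v : nat) (S : {set 'I_v}) :
  8 <= v -> blocking_set S ->
  alternating v (word S) \/ runs_2_or_3 v (word S).
Proof.
move=> v_ge8 blocking.
apply: constrained_word_dichotomy; last by lia.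
- by apply: blocking_word_constrained => //; lia.
- exact: word_periodic.
Qed.
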